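(* Fix $\lambda \geqslant 0$ and let $g(\lambda) = (1-e^{-\lambda})/\lambda$ for $\lambda>0$, $g(0)=1$. For a compactly supported Borel probability measure $\rho$ on $\mathbb R$ with $\operatorname{supp}\rho \subset [0,+\infty)$ and $\langle \rho, x\rangle = \int x\,d\rho(x) \neq 0$, define the measure $$A(\rho) = \left(1 - g(\lambda) + g(\lambda)\frac{x}{\langle \rho, x\rangle}\right)\rho,$$ i.e. the measure with density $x \mapsto 1 - g(\lambda) + g(\lambda)x/\langle\rho,x\rangle$ with respect to $\rho$. Let $\rho_0$ be such a measure, let $\rho_t = A^t(\rho_0)$ for $t \in \mathbb N$, and let $\bar x_t = \langle \rho_t, x\rangle$. Then for every $t \in \mathbb N$, $\bar x_{t+1} - \bar x_t \geqslant 0$.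
   Context: Probability densities are identified with Borel probability measures (nonnegative Radon measures of total mass $1$) on $\mathbb R$; for a measure $\rho$ and a function $\phi$, $\langle \rho,\phi\rangle = \int \phi\,d\rho$. $\mathbb N$ includes $0$. *)

From HB Require Import structures.
From mathcomp Require Import all_boot all_order all_algebra.
From mathcomp Require Import all_classical all_reals all_analysis measurable_realfun.
Set Implicit Arguments. Unset Strict Implicit. Unset Printing Implicit Defensive.
Import Order.TTheory GRing.Theory Num.Theory.
Import numFieldNormedType.Exports.
Local Open Scope classical_set_scope.
Local Open Scope ring_scope.

Definition gfun {R : realType} (lam : R) : R :=
  if lam == 0 then 1 else (1 - expR (- lam)) / lam.

Definition mean {R : realType} (rho : {measure set R -> \bar R}) : \bar R :=
  (\int[rho]_x (x%:E))%E.

Section affdens.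
Context {R : realType} (mu : {measure set R -> \bar R}) (a b : R).

Definition affdens_fun (A : set R) : \bar R :=
  (\int[mu]_(x in A) (Num.max 0 (a + b * x))%:E)%E.

Let dens_meas : measurable_fun setT (fun x : R => ((Num.max 0 (a + b * x))%:E : \bar R)).
Proof.
apply/measurable_EFinP; apply: measurable_maxr => //.
by apply: measurable_funD => //; apply: measurable_funM.
Qed.

Let affdens0 : affdens_fun set0 = 0%E.
Proof. by rewrite /affdens_fun integral_set0. Qed.

Let affdens_ge0 A : (0 <= affdens_fun A)%E.
Proof. by apply: integral_ge0 => x _; rewrite lee_fin le_max lexx. Qed.

Let affdens_sa : semi_sigma_additive affdens_fun.
Proof.
apply: semi_sigma_additive_nng_induced => // x.
by rewrite lee_fin le_max lexx.
Qed.

HB.instance Definition _ := isMeasure.Build _ _ _ affdens_fun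
  affdens0 affdens_ge0 affdens_sa.

Definition affdens : {measure set R -> \bar R} := affdens_fun.
End affdens.

(* A(rho) = (1 - g + g x / <rho,x>) rho.  The density is written with a
   truncation at 0, which is immaterial on supp rho. *)
Definition Aop {R : realType} (lam : R) (rho : {measure set R -> \bar R})
  : {measure set R -> \bar R} :=
  affdens rho (1 - gfun lam) (gfun lam / fine (mean rho)).

(* On a probability measure rho carried by [0, M] with mean m > 0, A(rho) has
   density 1 - g + (g/m) x, so it is again a probability measure carried by
   [0, M], and its mean is (1 - g) m + (g/m) <rho, x^2> >= (1 - g) m + g m = m,
   because <rho, x^2> >= m^2.  Hence the means increase along the orbit, which in
   turn keeps them positive and finite, so that A stays well defined. *)

From HB Require Import structures.
From mathcomp Require Import all_boot all_order all_algebra.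
From mathcomp Require Import all_classical all_reals all_analysis measurable_realfun.
From mathcomp Require Import ring lra.
Import Order.TTheory GRing.Theory Num.Theory.
Import numFieldNormedType.Exports HBNNSimple.
Local Open Scope classical_set_scope.
Local Open Scope ring_scope.
Local Open Scope ereal_scope.

Section density.
Context {d} {T : measurableType d} {R : realType}.
Variables (mu nu : {measure set T -> \bar R}) (h : T -> R).
Hypotheses (mh : measurable_fun setT h) (h_ge0 : forall x, (0 <= h x)%R).
Hypothesis nuE : forall A, measurable A -> nu A = \int[mu]_(x in A) (h x)%:E.

Let mhE : measurable_fun setT (EFin \o h). Proof. exact/measurable_EFinP. Qed.

Lemma integral_density_nnsfun (s : {nnsfun T >-> R}) E : measurable E ->
  \int[nu]_(x in E) (s x)%:E = \int[mu]_(x in E) ((s x)%:E * (h x)%:E).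
Proof.
move=> mE.
have ms r : measurable_fun E (fun x => (r * \1_(s @^-1` [set r]) x)%:E).
  by apply: (measurable_comp measurableT) => //; exact: measurable_funM.
transitivity (\int[nu]_(x in E)
    \sum_(r \in range s) (r * \1_(s @^-1` [set r]) x)%:E).
  by apply: eq_integral => x _; rewrite fsumEFin // -fimfunE.
transitivity (\int[mu]_(x in E)
    \sum_(r \in range s) (r * \1_(s @^-1` [set r]) x)%:E * (h x)%:E); last first.
  apply: eq_integral => x _; rewrite -ge0_mule_fsuml => [|r].
    by rewrite fsumEFin // -fimfunE.
  exact: nnfun_muleindic_ge0.
rewrite ge0_integral_fsum //; last by move=> r x _; exact: nnfun_muleindic_ge0.
rewrite ge0_integral_fsum //; first last.
- by move=> r x _; rewrite mule_ge0 ?nnfun_muleindic_ge0 ?lee_fin.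
- by move=> r; apply: emeasurable_funM => //; exact: measurable_funTS.
apply: eq_fsbigr => r /[!inE] -[y _ <-{r}].
under [RHS]eq_integral do rewrite EFinM -muleA.
rewrite integralZl_indic_nnsfun // ge0_integralZl ?lee_fin //; first last.
- by move=> x _; rewrite mule_ge0 ?lee_fin.
- by apply: emeasurable_funM; [exact/measurable_EFinP | exact: measurable_funTS].
congr (_ * _); rewrite integral_indic //.
transitivity (\int[mu]_(x in E) ((EFin \o h) \_ (s @^-1` [set s y])) x).
  by rewrite -integral_mkcondr -nuE 1?setIC //; exact: measurableI.
by apply: eq_integral => x _; rewrite epatch_indic /= muleC.
Qed.

Lemma ge0_integral_density f E : measurable E -> measurable_fun E f ->
    (forall x, E x -> 0 <= f x) ->
  \int[nu]_(x in E) f x = \int[mu]_(x in E) (f x * (h x)%:E).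
Proof.
move=> mE mf f_ge0; pose s := nnsfun_approx mE mf.
have s_cvg x : E x -> (EFin \o s ^~ x) @ \oo --> f x by exact: cvg_nnsfun_approx.
have s_nd x : E x -> {homo (fun n => (s n x)%:E) : m n / (m <= n)%N >-> m <= n}.
  by move=> _ m n mn; rewrite lee_fin; exact/lefP/nd_nnsfun_approx.
have ms n : measurable_fun E (EFin \o s n).
  by apply/measurable_EFinP/measurable_funTS; exact: measurable_funP.
have nu_lim : \int[nu]_(x in E) f x =
    lim (\int[nu]_(x in E) (s n x)%:E @[n --> \oo]).
  under eq_integral => x /[!inE] Ex do rewrite -(cvg_lim _ (s_cvg x Ex)) //.
  by apply: monotone_convergence => // n x _; rewrite lee_fin.
have mu_lim : \int[mu]_(x in E) (f x * (h x)%:E) =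
    lim (\int[mu]_(x in E) ((s n x)%:E * (h x)%:E) @[n --> \oo]).
  under eq_integral => x /[!inE] Ex.
    have h_fin : (h x)%:E \is a fin_num by [].
    rewrite -(cvg_lim _ (cvgeZr h_fin (s_cvg x Ex))) //.
  over.
  apply: monotone_convergence => //.
  - by move=> n; apply: emeasurable_funM; [exact: ms | exact: measurable_funTS].
  - by move=> n x _; rewrite mule_ge0 ?lee_fin.
  - by move=> x Ex m n mn; apply: lee_wpmul2r; [rewrite lee_fin | exact: s_nd].
by rewrite nu_lim mu_lim; under eq_fun do rewrite integral_density_nnsfun //.
Qed.

End density.

Section conull.
Context {d} {T : measurableType d} {R : realType}.
Context (mu : {measure set T -> \bar R}) {D : set T}.
Hypotheses (mD : measurable D) (mu_setC : mu (~` D) = 0).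

Lemma measure_conull : mu D = mu setT.
Proof.
rewrite -(setUv D) measureU //; first by move: mu_setC => /= ->; rewrite addr0.
- exact: measurableC.
- by rewrite setICr.
Qed.

Lemma integral_conull f : measurable_fun setT f ->
  \int[mu]_x f x = \int[mu]_(x in D) f x.
Proof.
move=> mf; rewrite [RHS]integral_mkcond; apply: ae_eq_integral => //.
  by apply/(measurable_restrictT _ _).1 => //; exact: measurable_funTS.
exists (~` D); split => //; first exact: measurableC.
by move=> x /= fx Dx; apply: fx => _; rewrite patchE mem_set.
Qed.

End conull.

Lemma sqr_integral_le_integral_sqr d (T : measurableType d) (R : realType)
    (mu : {measure set T -> \bar R}) (D : set T) (f : T -> R) (m : R) :
    measurable D -> mu D = 1 -> measurable_fun D f ->
    (forall x, D x -> (0 <= f x)%R) -> \int[mu]_(x in D) (f x)%:E = m%:E ->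
  (m ^+ 2)%:E <= \int[mu]_(x in D) (f x ^+ 2)%:E.
Proof.
move=> mD muD1 mf f_ge0 int_f.
have m_ge0 : (0 <= m)%R.
  by rewrite -lee_fin -int_f; apply: integral_ge0 => x Dx; rewrite lee_fin f_ge0.
have mfE : measurable_fun D (EFin \o f) by exact/measurable_EFinP.
have mf2 : measurable_fun D (fun x => (f x ^+ 2)%:E).
  by apply/measurable_EFinP; exact: measurable_funX.
(* integrate the tangent-line bound 2 m f <= f^2 + m^2, which needs no
   integrability of f^2 *)
have tangent : (2 * m * m)%:E <= \int[mu]_(x in D) ((f x ^+ 2)%:E + (m ^+ 2)%:E).
  have -> : (2 * m * m)%:E = \int[mu]_(x in D) ((2 * m)%:E * (f x)%:E).
    rewrite ge0_integralZl_EFin ?int_f ?mulr_ge0 //.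
  apply: ge0_le_integral => //.
  - by move=> x Dx; rewrite -EFinM lee_fin !mulr_ge0 ?f_ge0.
  - exact: emeasurable_funM.
  - exact: emeasurable_funD.
  - move=> x _; rewrite -EFinM -EFinD lee_fin.
    by have := sqr_ge0 (f x - m); nra.
rewrite ge0_integralD // ?integral_cst // ?muD1 ?mule1 in tangent; first last.
- by move=> x _; rewrite lee_fin sqr_ge0.
- by move=> x _; rewrite lee_fin sqr_ge0.
rewrite -(leeD2rE _ _ (x := (m ^+ 2)%:E)) //; apply: le_trans tangent.
by rewrite -EFinD lee_fin; nra.
Qed.

Lemma setC_itvcc (R : realType) (a b : R) :
  ~` `[a, b] = [set x | (x < a)%R \/ (b < x)%R].
Proof. by rewrite setCitv; apply/seteqP; split => x /=; rewrite !in_itv /= andbT. Qed.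

Lemma gfun_ge0 (R : realType) (lam : R) : (0 <= lam)%R -> (0 <= gfun lam)%R.
Proof.
rewrite /gfun; case: eqP => // /eqP lam_neq0 lam_ge0.
by rewrite divr_ge0 // subr_ge0 expR_le1 oppr_le0.
Qed.

Lemma gfun_le1 (R : realType) (lam : R) : (0 <= lam)%R -> (gfun lam <= 1)%R.
Proof.
rewrite /gfun; case: eqP => // /eqP lam_neq0 lam_ge0.
have lam_gt0 : (0 < lam)%R by rewrite lt_def lam_neq0.
rewrite ler_pdivrMr // mul1r; have := expR_ge1Dx (- lam); lra.
Qed.

Section support.
Context {R : realType} {M : R} {rho : {measure set R -> \bar R}}.
Hypotheses (rho1 : rho setT = 1) (rho_setC : rho (~` `[0%R, M]) = 0).

Let mD : measurable `[0%R, M] := measurable_itv _.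

Lemma mean_support : mean rho = \int[rho]_(x in `[0%R, M]) x%:E.
Proof. by rewrite /mean (integral_conull rho mD) //; exact/measurable_EFinP. Qed.

Lemma mean_ge0 : 0 <= mean rho.
Proof.
rewrite mean_support; apply: integral_ge0 => x.
by rewrite /= in_itv /= lee_fin => /andP[].
Qed.

Lemma mean_fin_num : mean rho \is a fin_num.
Proof.
rewrite ge0_fin_numE ?mean_ge0 // (@le_lt_trans _ _ M%:E) ?ltry //.
rewrite mean_support -[M%:E]mule1 -rho1 -(measure_conull rho mD) // -integral_cst //.
by apply: ge0_le_integral => // x; rewrite /= in_itv /= lee_fin => /andP[].
Qed.

End support.

Section Aop_step.
Context {R : realType} {lam M : R} {rho : {measure set R -> \bar R}}.
Hypotheses (lam_ge0 : (0 <= lam)%R) (rho1 : rho setT = 1).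
Hypotheses (rho_setC : rho (~` `[0%R, M]) = 0) (mean_gt0 : 0 < mean rho).

Let D : set R := `[0%R, M].
Let mD : measurable D := measurable_itv _.
Let m := fine (mean rho).
Let mean_rho : mean rho = m%:E.
Proof. by rewrite fineK // (mean_fin_num rho1 rho_setC). Qed.
Let m_gt0 : (0 < m)%R. Proof. by rewrite -lte_fin -mean_rho. Qed.

Let a := (1 - gfun lam)%R.
Let b := (gfun lam / m)%R.
Let a_ge0 : (0 <= a)%R. Proof. by rewrite subr_ge0 gfun_le1. Qed.
Let b_ge0 : (0 <= b)%R. Proof. by apply: divr_ge0; [exact: gfun_ge0 | exact: ltW]. Qed.

Let dens x := Num.max 0%R (a + b * x)%R.
Let dens_ge0 x : (0 <= dens x)%R. Proof. by rewrite le_max lexx. Qed.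
Let densE x : D x -> dens x = (a + b * x)%R.
Proof.
rewrite /D /= in_itv /= => /andP[x_ge0 _]; apply/max_idPr.
exact: addr_ge0 a_ge0 (mulr_ge0 b_ge0 x_ge0).
Qed.
Let mdens : measurable_fun setT dens.
Proof.
by apply: measurable_maxr => //; apply: measurable_funD => //; exact: measurable_funM.
Qed.

Let AopE : Aop lam rho = affdens rho a b. Proof. by rewrite /Aop mean_rho. Qed.

Lemma Aop_setT : Aop lam rho setT = 1.
Proof.
have mdensE : measurable_fun setT (EFin \o dens) by exact/measurable_EFinP.
rewrite AopE /= /affdens_fun (integral_conull rho mD) //.
transitivity (\int[rho]_(x in D) (a%:E + b%:E * x%:E)).
  by apply: eq_integral => x /[!inE] Dx; rewrite -/(dens x) densE // EFinD EFinM.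
rewrite ge0_integralD //; first last.
- by apply: emeasurable_funM => //; exact/measurable_EFinP.
- move=> x; rewrite /D /= in_itv /= => /andP[x_ge0 _].
  by rewrite -EFinM lee_fin; exact: mulr_ge0 b_ge0 x_ge0.
rewrite integral_cst // (measure_conull rho mD) // rho1 mule1.
rewrite ge0_integralZl_EFin //; last first.
  by move=> x; rewrite /D /= in_itv /= lee_fin => /andP[].
rewrite -mean_support // mean_rho -EFinM -EFinD /b divfK ?gt_eqF //.
by rewrite /a subrK.
Qed.

Lemma Aop_setC : Aop lam rho (~` D) = 0.
Proof.
rewrite AopE; apply: null_set_integral => //; first exact: measurableC.
by apply/measurable_funTS/measurable_EFinP.
Qed.

Lemma le_mean_Aop : mean rho <= mean (Aop lam rho).
Proof.
have x_ge0 x : D x -> (0 <= x)%R by rewrite /D /= in_itv /= => /andP[].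
have mean_rhoD : \int[rho]_(x in D) x%:E = m%:E by rewrite -mean_support.
have second_moment : (m ^+ 2)%:E <= \int[rho]_(x in D) (x ^+ 2)%:E.
  by apply: sqr_integral_le_integral_sqr => //; rewrite (measure_conull rho).
rewrite (mean_support Aop_setC) AopE.
rewrite (ge0_integral_density rho (affdens rho a b) dens mdens dens_ge0
  (fun _ _ => erefl)) //.
rewrite (eq_integral (fun x => a%:E * x%:E + b%:E * (x ^+ 2)%:E)); last first.
  move=> x /[!inE] Dx; rewrite -/(dens x) densE // -!EFinM -EFinD.
  by congr EFin; ring.
have ax_ge0 x : D x -> 0 <= a%:E * x%:E.
  by move=> Dx; rewrite -EFinM lee_fin; exact: mulr_ge0 a_ge0 (x_ge0 x Dx).
have bx2_ge0 x : D x -> 0 <= b%:E * (x ^+ 2)%:E.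
  by move=> _; rewrite -EFinM lee_fin; exact: mulr_ge0 b_ge0 (sqr_ge0 x).
rewrite ge0_integralD //; first last.
- by apply: emeasurable_funM => //; apply/measurable_EFinP; exact: measurable_funX.
- exact: emeasurable_funM.
rewrite !ge0_integralZl_EFin //; first last.
- by apply/measurable_EFinP; exact: measurable_funX.
- by move=> x _; rewrite lee_fin sqr_ge0.
rewrite mean_rhoD mean_rho.
apply: le_trans (leeD2l _ (lee_wpmul2l _ second_moment)); last by rewrite lee_fin.
rewrite -!EFinM -EFinD lee_fin /a /b.
by rewrite expr2 mulrA divfK ?gt_eqF // -mulrDl subrK mul1r.
Qed.

End Aop_step.

Lemma iter_Aop_invariant {R : realType} {lam M : R}
    {rho0 : {measure set R -> \bar R}} :
    (0 <= lam)%R -> rho0 setT = 1 -> rho0 (~` `[0%R, M]) = 0 -> 0 < mean rho0 ->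
  forall t, let rho := iter t (Aop lam) rho0 in
    [/\ rho setT = 1, rho (~` `[0%R, M]) = 0 & mean rho0 <= mean rho].
Proof.
move=> lam_ge0 rho1 rho_setC mean_gt0; elim=> [|t [rhot1 rhot_setC le_mean]].
  by split.
have mean_gt0' := lt_le_trans mean_gt0 le_mean.
rewrite iterS => rho; rewrite {}/rho; split.
- exact: Aop_setT lam_ge0 rhot1 rhot_setC mean_gt0'.
- exact: Aop_setC rhot1 rhot_setC.
- exact: le_trans le_mean (le_mean_Aop lam_ge0 rhot1 rhot_setC mean_gt0').
Qed.

Local Open Scope ring_scope.

Theorem mainTheorem1 (R : realType) (lam : R) (rho0 : {measure set R -> \bar R}) :
  0 <= lam ->
  rho0 setT = 1%E ->
  (exists M : R, rho0 [set x : R | x < 0 \/ M < x] = 0%E) ->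
  mean rho0 != 0%E ->
  forall t : nat,
    (mean (iter t.+1 (Aop lam) rho0) - mean (iter t (Aop lam) rho0) >= 0)%E.
Proof.
move=> lam_ge0 rho1 [M]; rewrite -setC_itvcc => rho_setC mean_neq0 t.
have mean_gt0 : (0 < mean rho0)%E by rewrite lt_def mean_neq0 (mean_ge0 rho_setC).
have [rhot1 rhot_setC le_mean] := iter_Aop_invariant lam_ge0 rho1 rho_setC mean_gt0 t.
have mean_gt0' := lt_le_trans mean_gt0 le_mean.
rewrite iterS subre_ge0; first exact: le_mean_Aop lam_ge0 rhot1 rhot_setC mean_gt0'.
exact: mean_fin_num (Aop_setT lam_ge0 rhot1 rhot_setC mean_gt0')
  (Aop_setC rhot1 rhot_setC).
Qed.
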